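(* Consider a mean-variance team stochastic game as described in the context and let $\tilde{\boldsymbol{\mu}}\in\mathcal{U}$ be a first-order stationary point. For $\mu_i\in\mathcal{U}_i$ write $\delta_{\tilde\mu_i}^{\mu_i}=(1-\delta)\tilde\mu_i+\delta\mu_i$ and $D_i(\mu_i)=\frac{\mathrm{d}}{\mathrm{d}\delta}J(\delta_{\tilde\mu_i}^{\mu_i},\tilde{\boldsymbol{\mu}}_{-i})\big|_{\delta=0}$. (1) If $D_i(\mu_i)<0$ for every agent $i\in\mathcal{N}$ and every $\mu_i\in\mathcal{U}_i$ with $\mu_i\neq\tilde\mu_i$, then $\tilde{\boldsymbol{\mu}}$ is a strict local Nash equilibrium. (2) If there exist agents $i$ and policies $\mu_i'\in\mathcal{U}_i$ with $D_i(\mu'_i)=0$, then $\tilde{\boldsymbol{\mu}}$ is a local Nash equilibrium if and only if for every such agent $i$ and such $\mu_i'$ there exists $\bar\delta\in(0,1]$ such that for all $\delta\in(0,\bar\delta]$, $\eta(\delta_{\tilde\mu_i}^{\mu_i'},\tilde{\boldsymbol{\mu}}_{-i})=\eta(\tilde\mu_i,\tilde{\boldsymbol{\mu}}_{-i})$.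
   Context: Game: finite agents $\mathcal{N}=\{1,\dots,N\}$, finite state space $\mathcal{S}$, finite action sets $\mathcal{A}_i$, $\mathcal{A}=\prod_i\mathcal{A}_i$, transition kernel $P(s'|s,\boldsymbol{a})$, common reward $r:\mathcal{S}\times\mathcal{A}\to\mathbb{R}$. Policies $\mu_i:\mathcal{S}\to\Delta(\mathcal{A}_i)$ (set $\mathcal{U}_i$); joint policies $\boldsymbol{\mu}\in\mathcal{U}=\prod_i\mathcal{U}_i$ with $\boldsymbol{\mu}(\boldsymbol{a}|s)=\prod_i\mu_i(a_i|s)$; $(\mu_i,\boldsymbol{\mu}_{-i})$ means agent $i$ uses $\mu_i$, others use $\boldsymbol{\mu}_{-i}$; $(1-\delta)\tilde\mu_i+\delta\mu_i$ is the policy $s\mapsto(1-\delta)\tilde\mu_i(\cdot|s)+\delta\mu_i(\cdot|s)$. Standing assumption: the chain $P^{\boldsymbol{\mu}}(s'|s)=\sum_{\boldsymbol{a}}\boldsymbol{\mu}(\boldsymbol{a}|s)P(s'|s,\boldsymbol{a})$ is ergodic for every $\boldsymbol{\mu}\in\mathcal{U}$, with stationary distribution $\pi^{\boldsymbol{\mu}}$. $\eta(\boldsymbol{\mu})=\eta^{\boldsymbol{\mu}}=\sum_s\pi^{\boldsymbol{\mu}}(s)\sum_{\boldsymbol{a}}\boldsymbol{\mu}(\boldsymbol{a}|s)r(s,\boldsymbol{a})$ (long-run average reward); $\zeta^{\boldsymbol{\mu}}=\sum_s\pi^{\boldsymbol{\mu}}(s)\sum_{\boldsymbol{a}}\boldsymbol{\mu}(\boldsymbol{a}|s)(r(s,\boldsymbol{a})-\eta^{\boldsymbol{\mu}})^2$;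 for fixed $\beta\ge0$, $J(\boldsymbol{\mu})=\eta^{\boldsymbol{\mu}}-\beta\zeta^{\boldsymbol{\mu}}$. Derivatives at $\delta=0$ are right derivatives. A joint policy $\tilde{\boldsymbol{\mu}}$ is a first-order stationary point if $\frac{\mathrm{d}}{\mathrm{d}\delta}J((1-\delta)\tilde\mu_i+\delta\mu_i,\tilde{\boldsymbol{\mu}}_{-i})|_{\delta=0}\le0$ for all $i\in\mathcal{N}$, $\mu_i\in\mathcal{U}_i$. A joint policy $\boldsymbol{\mu}^*$ is a local Nash equilibrium if there is $\bar\delta\in(0,1]$ such that for all $\delta\in(0,\bar\delta]$, all $i\in\mathcal{N}$ and all $\mu_i\in\mathcal{U}_i$: $J(\mu_i^*,\boldsymbol{\mu}^*_{-i})\ge J((1-\delta)\mu_i^*+\delta\mu_i,\boldsymbol{\mu}^*_{-i})$; it is a strict local Nash equilibrium if the inequality is strict for all $\mu_i\neq\mu_i^*$. *)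

From HB Require Import structures.
From mathcomp Require Import all_boot all_order all_algebra.
From mathcomp Require Import all_classical all_reals all_analysis.
Set Implicit Arguments. Unset Strict Implicit. Unset Printing Implicit Defensive.
Import Order.TTheory GRing.Theory Num.Theory.
Import numFieldNormedType.Exports.
Local Open Scope classical_set_scope.
Local Open Scope ring_scope.

Section MVGame.
Variables (R : realType) (N : nat) (S : finType) (A : 'I_N -> finType).

Definition jact := {dffun forall i : 'I_N, A i}.

Definition is_dist (T : finType) (p : T -> R) :=
  (forall x, 0 <= p x) /\ \sum_x p x = 1.

Definition is_kernel (P : S -> jact -> S -> R) :=
  forall s a, is_dist (P s a).

Definition is_policy (i : 'I_N) (mu : S -> A i -> R) :=
  forall s, is_dist (mu s).

Definition jpolicy := forall i : 'I_N, S -> A i -> R.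
Definition is_jpolicy (mu : jpolicy) := forall i, is_policy (mu i).

Definition jprob (mu : jpolicy) (s : S) (a : jact) : R :=
  \prod_(i < N) mu i s (a i).

Definition chain (P : S -> jact -> S -> R) (mu : jpolicy) (s s' : S) : R :=
  \sum_a jprob mu s a * P s a s'.

Fixpoint kpow (K : S -> S -> R) (n : nat) (s s' : S) : R :=
  match n with
  | 0%N => if s == s' then 1 else 0
  | n'.+1 => \sum_t kpow K n' s t * K t s'
  end.

(* ergodic finite chain: irreducible and aperiodic, i.e. some power of the
   transition matrix has all entries positive *)
Definition ergodic (K : S -> S -> R) :=
  exists n : nat, forall s s', 0 < kpow K n s s'.

Definition is_stationary (K : S -> S -> R) (pi : {ffun S -> R}) :=
  is_dist pi /\ forall s', \sum_s pi s * K s s' = pi s'.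

(* the stationary distribution pi^mu (unique under ergodicity) *)
Definition statd (K : S -> S -> R) : {ffun S -> R} :=
  xget [ffun=> 0] [set pi | is_stationary K pi].

Variables (P : S -> jact -> S -> R) (r : S -> jact -> R) (beta : R).

Definition etaR (mu : jpolicy) : R :=
  \sum_s statd (chain P mu) s * \sum_a jprob mu s a * r s a.

Definition zeta (mu : jpolicy) : R :=
  \sum_s statd (chain P mu) s *
    \sum_a jprob mu s a * (r s a - etaR mu) ^+ 2.

Definition J (mu : jpolicy) : R := etaR mu - beta * zeta mu.

Definition mixp (i : 'I_N) (d : R) (mut mu : S -> A i -> R) : S -> A i -> R :=
  fun s a => (1 - d) * mut s a + d * mu s a.

Definition dev (mut : jpolicy) (i : 'I_N) (mu : S -> A i -> R) : jpolicy :=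
  @dfwith _ (fun j : 'I_N => S -> A j -> R) mut i mu.

Definition rderiv0 (f : R -> R) : R :=
  lim ((fun h : R => h^-1 * (f h - f 0)) @ 0^'+).

Definition Dder (mut : jpolicy) (i : 'I_N) (mu : S -> A i -> R) : R :=
  rderiv0 (fun d => J (dev mut (mixp d (mut i) mu))).

Definition first_order_stationary (mut : jpolicy) :=
  forall (i : 'I_N) (mu : S -> A i -> R), is_policy mu -> Dder mut mu <= 0.

Definition local_NE (mus : jpolicy) :=
  exists dbar : R, 0 < dbar <= 1 /\
    forall d : R, 0 < d <= dbar ->
    forall (i : 'I_N) (mu : S -> A i -> R), is_policy mu ->
      J (dev mus (mixp d (mus i) mu)) <= J mus.

Definition strict_local_NE (mus : jpolicy) :=
  exists dbar : R, 0 < dbar <= 1 /\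
    forall d : R, 0 < d <= dbar ->
    forall (i : 'I_N) (mu : S -> A i -> R), is_policy mu -> mu <> mus i ->
      J (dev mus (mixp d (mus i) mu)) < J mus.

End MVGame.

From HB Require Import structures.
From mathcomp Require Import all_boot all_order all_algebra.
From mathcomp Require Import all_classical all_reals all_analysis.
From mathcomp Require Import ring lra.
Set Implicit Arguments. Unset Strict Implicit. Unset Printing Implicit Defensive.
Import Order.TTheory GRing.Theory Num.Theory.
Import numFieldNormedType.Exports.
Local Open Scope classical_set_scope.
Local Open Scope ring_scope.

(* For any constant e the mean-variance objective equals the stationary average
   of the shifted reward r - beta (r - e)^2 plus beta (eta - e)^2.  A solution of
   the Poisson equation of the chain of the candidate policy gives the
   performance-difference formula, so along the mixture path of agent i both
   terms are delta times gains weighted by the stationary distribution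
   pi_delta, which is Lipschitz in delta.  Hence D_i is the pi-weighted gain of
   the shifted reward, and first-order stationarity, tested on deviations at a
   single state to a single action, makes every such elementary gain alpha
   nonpositive.  Under either hypothesis alpha = 0 forces the elementary gain
   of r to vanish, so the quadratic term is dominated by the linear one
   uniformly over deviations, and J decreases (strictly if D_i < 0) for all
   small delta.  Conversely, at a local equilibrium with D_i = 0 all gains of
   the shifted reward vanish, and J(delta) - J = beta (eta(delta) - eta)^2 <= 0
   forces eta to be flat. *)

Section FiniteDistribution.
Variable R : realType.

Definition stochastic (T U : finType) (K : T -> U -> R) := forall t, is_dist (K t).

Definition mix (T U : Type) (d : R) (K0 K1 : T -> U -> R) (t : T) (u : U) : R :=
  (1 - d) * K0 t u + d * K1 t u.

Lemma mix0 (T U : Type) (K0 K1 : T -> U -> R) : mix 0 K0 K1 = K0.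
Proof. by apply/funext => t; apply/funext => u; rewrite /mix subr0 mul1r mul0r addr0. Qed.

Lemma mix_stochastic (T U : finType) d (K0 K1 : T -> U -> R) :
  0 <= d <= 1 -> stochastic K0 -> stochastic K1 -> stochastic (mix d K0 K1).
Proof.
move=> /andP[d0 d1] hK0 hK1 t; have [K0ge0 K0sum] := hK0 t; have [K1ge0 K1sum] := hK1 t.
split=> [u|]; first by rewrite addr_ge0 // mulr_ge0 // subr_ge0.
by rewrite big_split /= -!mulr_sumr K0sum K1sum !mulr1 subrK.
Qed.

Section Sums.
Variable T : finType.
Implicit Types (F p : T -> R).

Lemma ler_sum_term F x : (forall y, 0 <= F y) -> F x <= \sum_y F y.
Proof. by move=> F0; rewrite (bigD1 x) //= lerDl sumr_ge0. Qed.

Lemma dist_le1 p x : is_dist p -> p x <= 1.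
Proof. by case=> p0 <-; exact: ler_sum_term. Qed.

Lemma ler_norm_sum_dist p F : is_dist p -> `|\sum_x p x * F x| <= \sum_x `|F x|.
Proof.
move=> hp; apply: le_trans (ler_norm_sum _ _ _) _; apply: ler_sum => x _.
by rewrite normrM ger0_norm ?hp.1 // ler_piMl // dist_le1.
Qed.

Lemma sum_dist_const p c : is_dist p -> \sum_x p x * c = c.
Proof. by case=> _ p1; rewrite -mulr_suml p1 mul1r. Qed.

Lemma sum_delta_mulr (x0 : T) F : \sum_x (if x0 == x then 1 else 0) * F x = F x0.
Proof.
rewrite (bigD1 x0) //= eqxx mul1r big1 ?addr0 // => x /negbTE.
by rewrite eq_sym => ->; rewrite mul0r.
Qed.

Lemma sum_delta (x0 : T) : \sum_x (if x0 == x then 1 else 0) = 1 :> R.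
Proof. by rewrite (bigD1 x0) //= eqxx big1 ?addr0 // => x /negbTE; rewrite eq_sym => ->. Qed.

Lemma sum_delta_mull (x0 : T) F : \sum_x F x * (if x == x0 then 1 else 0) = F x0.
Proof. by rewrite (bigD1 x0) //= eqxx mulr1 big1 ?addr0 // => x /negbTE ->; rewrite mulr0. Qed.

Lemma exists_ub F : exists M, 0 <= M /\ forall x, F x <= M.
Proof.
exists (\sum_x `|F x|); split=> [|x]; first exact: sumr_ge0.
exact: le_trans (ler_norm _) (ler_sum_term _ _).
Qed.

Lemma ratio_bound (F G : T -> R) : (forall x, G x = 0 -> F x = 0) ->
  exists K, forall x, `|F x| <= K * `|G x|.
Proof.
move=> FG; have [K [K0 hK]] := exists_ub (fun x => `|F x| / `|G x|).
exists K => x; have [/FG ->|Gx0] := eqVneq (G x) 0; first by rewrite normr0 mulr_ge0.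
by rewrite -ler_pdivrMr ?normr_gt0.
Qed.

Lemma exists_lb_gt0 (x0 : T) F : (forall x, 0 < F x) -> exists c, 0 < c /\ forall x, c <= F x.
Proof.
move=> Fgt0; have [m _ Fm] := arg_minP F (isT : predT x0).
by exists (F m); split=> // x; exact: Fm.
Qed.

Lemma mean_variance_shift (w f : T -> R) (beta e : R) : \sum_x w x = 1 ->
  let m := \sum_x w x * f x in
  m - beta * \sum_x w x * (f x - m) ^+ 2 =
  \sum_x w x * (f x - beta * (f x - e) ^+ 2) + beta * (m - e) ^+ 2.
Proof.
move=> w1 m; set F2 := \sum_x w x * f x ^+ 2.
have avg a b c : \sum_x w x * (a * f x ^+ 2 + b * f x + c) = a * F2 + b * m + c.
  rewrite -[c in RHS]mul1r -w1 mulr_suml !mulr_sumr -!big_split /=.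
  by apply: eq_bigr => x _; ring.
have -> : \sum_x w x * (f x - m) ^+ 2 =
    \sum_x w x * (1 * f x ^+ 2 + (- 2 * m) * f x + m ^+ 2).
  by apply: eq_bigr => x _; congr (_ * _); ring.
have -> : \sum_x w x * (f x - beta * (f x - e) ^+ 2) =
    \sum_x w x * (- beta * f x ^+ 2 + (1 + 2 * beta * e) * f x - beta * e ^+ 2).
  by apply: eq_bigr => x _; congr (_ * _); ring.
rewrite !avg; ring.
Qed.

End Sums.
End FiniteDistribution.

Lemma sum_enum_val (V : nmodType) (T : finType) (F : T -> V) :
  \sum_(i < #|T|) F (enum_val i) = \sum_t F t.
Proof. by rewrite -(big_enum_val (A := T)) /=; apply: eq_bigl => t; rewrite inE. Qed.


Lemma linear_surj_of_inj (F : fieldType) (T : finType) (M : T -> T -> F) :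
  (forall x : T -> F, (forall s, \sum_t M s t * x t = 0) -> forall t, x t = 0) ->
  exists H : (T -> F) -> T -> F, forall y s, \sum_t M s t * H y t = y s.
Proof.
move=> Minj.
pose rowv (x : T -> F) : 'rV[F]_#|T| := \row_i x (enum_val i).
pose A : 'M[F]_#|T| := \matrix_(i, j) M (enum_val j) (enum_val i).
have rowvK (v : 'rV[F]_#|T|) : rowv (fun t => v 0 (enum_rank t)) = v.
  by apply/rowP => j; rewrite mxE enum_valK.
have rowvA x s : (rowv x *m A) 0 (enum_rank s) = \sum_t M s t * x t.
  rewrite mxE -[RHS]sum_enum_val; apply: eq_bigr => i _.
  by rewrite !mxE enum_rankK mulrC.
have Aunit : A \in unitmx.
  rewrite -row_free_unit; apply: inj_row_free => v vA0.
  apply/rowP => i; rewrite mxE -[i]enum_valK.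
  apply: (Minj (fun t => v 0 (enum_rank t))) => s.
  by rewrite -rowvA rowvK vA0 mxE.
exists (fun y t => (rowv y *m invmx A) 0 (enum_rank t)) => y s.
by rewrite -rowvA rowvK mulmxKV // mxE enum_rankK.
Qed.

Section FiniteMarkovChain.
Variables (R : realType) (S : finType).
Implicit Types (K : S -> S -> R) (x f : S -> R).

Definition harmonic K x := forall s, \sum_t K s t * x t = x s.
Definition invariant K f := forall t, \sum_s f s * K s t = f t.

Lemma kpow_harmonic K x n s : harmonic K x -> \sum_t kpow K n s t * x t = x s.
Proof.
move=> hx; elim: n s => [|n IHn] s /=; first exact: sum_delta_mulr.
under eq_bigr do rewrite mulr_suml.
rewrite exchange_big /= -[RHS]IHn; apply: eq_bigr => u _.
by rewrite -hx mulr_sumr; apply: eq_bigr => t _; rewrite mulrA.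
Qed.

Lemma kpow_invariant K f n t : invariant K f -> \sum_s f s * kpow K n s t = f t.
Proof.
move=> hf; elim: n t => [|n IHn] t /=; first exact: sum_delta_mull.
under eq_bigr do rewrite mulr_sumr.
rewrite exchange_big /= -[RHS]hf; apply: eq_bigr => u _.
by rewrite -IHn mulr_suml; apply: eq_bigr => s _; rewrite mulrA.
Qed.

Lemma kpow_stochastic K n : stochastic K -> stochastic (kpow K n).
Proof.
move=> hK s; split=> [t|].
  elim: n s t => [|n IHn] s t /=; first by case: eqP.
  by apply: sumr_ge0 => u _; rewrite mulr_ge0 // (hK u).1.
have := @kpow_harmonic K (fun _ => 1) n s; under eq_bigr do rewrite mulr1; apply=> u.
by under eq_bigr do rewrite mulr1; exact: (hK u).2.
Qed.

Lemma invariant_norm K f : stochastic K -> invariant K f -> invariant K (fun s => `|f s|).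
Proof.
move=> hK hf; pose e t := \sum_s `|f s| * K s t - `|f t|.
have e_ge0 t : 0 <= e t.
  rewrite subr_ge0 -{1}hf; apply: le_trans (ler_norm_sum _ _ _) _.
  by apply: ler_sum => s _; rewrite normrM (ger0_norm ((hK s).1 t)).
have : \sum_t e t = 0.
  rewrite sumrB exchange_big /=.
  by under eq_bigr do rewrite -mulr_sumr (hK _).2 mulr1; rewrite subrr.
move=> /psumr_eq0P e0 t; apply/eqP; rewrite -subr_eq0; apply/eqP.
exact: e0.
Qed.

Lemma stationary_exists K (s0 : S) : stochastic K -> exists pi, is_stationary K pi.
Proof.
move=> hK.
have [[f [fK [t0 ft0]]]|] := pselect (exists f, invariant K f /\ exists t, f t != 0).
  have fnK := invariant_norm hK fK; set Z := \sum_s `|f s|.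
  have Z_gt0 : 0 < Z.
    by rewrite /Z (bigD1 t0) //= ltr_pwDl ?normr_gt0 // sumr_ge0.
  exists [ffun s => `|f s| / Z]; split; first split.
  - by move=> s; rewrite ffunE divr_ge0 // ltW.
  - by under eq_bigr do rewrite ffunE; rewrite -mulr_suml divff ?gt_eqF.
  - move=> t; under eq_bigr do rewrite ffunE mulrAC.
    by rewrite -mulr_suml fnK ffunE.
(* Otherwise f |-> f (K - 1) is injective, hence onto, yet it only reaches
   vectors of total mass 0. *)
move=> noinv; exfalso.
pose M t s := K s t - (if s == t then 1 else 0).
have MfE f t : \sum_s M t s * f s = \sum_s f s * K s t - f t.
  rewrite -(sum_delta_mull t f) -sumrB; apply: eq_bigr => s _.
  by rewrite /M; case: (s == t); ring.
have Minj f : (forall t, \sum_s M t s * f s = 0) -> forall t, f t = 0.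
  move=> hf t; have [//|ft0] := eqVneq (f t) 0; exfalso.
  apply: noinv; exists f; split; last by exists t.
  by move=> t'; apply/eqP; rewrite -subr_eq0 -MfE hf.
have [G hG] := linear_surj_of_inj Minj.
have : \sum_t \sum_s M t s * G (fun t => if s0 == t then 1 else 0) s = 1.
  by under eq_bigr do rewrite hG; exact: sum_delta.
rewrite exchange_big big1 => [/eqP|s _]; first by rewrite eq_sym oner_eq0.
by rewrite -mulr_suml /M sumrB (hK s).2 sum_delta subrr mul0r.
Qed.

Lemma statd_stationary K (s0 : S) : stochastic K -> is_stationary K (statd K).
Proof. by move=> hK; apply: xgetPex; exact: stationary_exists s0 hK. Qed.

Lemma stationary_gt0 K pi s : stochastic K -> ergodic K -> is_stationary K pi -> 0 < pi s.
Proof.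
move=> hK [n Kn_gt0] [[pi_ge0 pi1] piK].
have [t pit_gt0] : exists t, 0 < pi t.
  apply/not_existsP => pi_le0; move: pi1; rewrite big1 => [/eqP|t _].
    by rewrite eq_sym oner_eq0.
  by apply/eqP; rewrite eq_le pi_ge0 andbT leNgt; apply/negP => /(pi_le0 t).
rewrite -(kpow_invariant n s piK) (bigD1 t) //= ltr_pwDl ?mulr_gt0 //.
by apply: sumr_ge0 => u _; rewrite mulr_ge0 // (kpow_stochastic n hK u).1.
Qed.

Lemma harmonic_const K x : stochastic K -> ergodic K -> harmonic K x -> forall s t, x s = x t.
Proof.
move=> hK [n Kn_gt0] hx s.
have [m _ xm] := arg_maxP x (isT : predT s).
have hKn := kpow_stochastic n hK.
suff xE t : x t = x m by move=> t; rewrite !xE.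
have : \sum_t kpow K n m t * (x m - x t) = 0.
  under eq_bigr do rewrite mulrBr.
  by rewrite sumrB -mulr_suml (hKn m).2 mul1r kpow_harmonic // subrr.
move=> /psumr_eq0P /(_ t isT) /eqP; rewrite mulf_eq0 gt_eqF //= subr_eq0 => /(_ _)/eqP -> //.
by move=> u _; rewrite mulr_ge0 ?(hKn m).1 // subr_ge0; exact: xm.
Qed.

Lemma poisson_solvable K pi : stochastic K -> ergodic K -> is_stationary K pi ->
  exists bias : (S -> R) -> S -> R, forall y s,
    bias y s - \sum_t K s t * bias y t = y s - \sum_t pi t * y t.
Proof.
move=> hK Kerg [[_ pi1] piK].
(* The fundamental matrix 1 - K + 1 pi is injective: its kernel consists of
   harmonic, hence constant, functions of pi-mean 0. *)
pose M s t := (if s == t then 1 else 0) - K s t + pi t.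
have MxE x s : \sum_t M s t * x t = x s - \sum_t K s t * x t + \sum_t pi t * x t.
  rewrite -(sum_delta_mulr s x) -sumrB -big_split /=; apply: eq_bigr => t _.
  by rewrite /M; case: (s == t); ring.
have pi_Kx x : \sum_s pi s * \sum_t K s t * x t = \sum_t pi t * x t.
  under eq_bigr do rewrite mulr_sumr; rewrite exchange_big /=.
  by apply: eq_bigr => t _; rewrite -[in RHS]piK mulr_suml; apply: eq_bigr => s _; rewrite mulrA.
have pi_Mx x : \sum_s pi s * \sum_t M s t * x t = \sum_t pi t * x t.
  under eq_bigr do rewrite MxE !mulrDr mulrN.
  by rewrite !big_split /= sumrN pi_Kx -mulr_suml pi1 mul1r subrK.
have Minj x : (forall s, \sum_t M s t * x t = 0) -> forall t, x t = 0.
  move=> Mx0; have pix0 : \sum_t pi t * x t = 0.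
    by rewrite -pi_Mx big1 // => s _; rewrite Mx0 mulr0.
  have xK : harmonic K x.
    by move=> s; have := Mx0 s; rewrite MxE pix0 addr0 => /eqP; rewrite subr_eq0 => /eqP ->.
  move=> t; rewrite -[RHS]pix0.
  under eq_bigr do rewrite (harmonic_const hK Kerg xK _ t).
  by rewrite -mulr_suml pi1 mul1r.
have [bias Mbias] := linear_surj_of_inj Minj.
exists bias => y s.
have pi_bias : \sum_t pi t * bias y t = \sum_t pi t * y t.
  by rewrite -pi_Mx; apply: eq_bigr => u _; rewrite Mbias.
by rewrite -[y s](Mbias y s) MxE pi_bias addrK.
Qed.

End FiniteMarkovChain.

Lemma lim_at_right0_of_bound (R : realType) (f : R -> R) (L c : R) :
  (forall h, 0 < h <= 1 -> `|f h - L| <= c * h) -> lim (f @ 0^'+) = L.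
Proof.
move=> fL; apply: cvg_lim => //; apply/cvgrPdist_le => eps eps_gt0.
have m_gt0 : 0 < Num.min 1 (eps / (`|c| + 1)).
  by rewrite lt_min ltr01 /= divr_gt0 // ltr_pwDr.
near=> h.
have h_gt0 : 0 < h by near: h; exact: nbhs_right_gt.
have : h < Num.min 1 (eps / (`|c| + 1)) by near: h; exact: nbhs_right_lt.
rewrite lt_min => /andP[h_lt1]; rewrite ltr_pdivlMr ?ltr_pwDr // => h_small.
rewrite distrC; apply: le_trans (fL h _) _; first by rewrite h_gt0 ltW.
have := ler_norm c; nra.
Unshelve. all: end_near.
Qed.

Section StationaryAverage.
Variables (R : realType) (S X : finType) (P : S -> X -> S -> R) (s0 : S).
Hypothesis P_stoch : forall s, stochastic (P s).
Implicit Types (j : S -> X -> R) (q : S -> X -> R).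

Definition induced_chain j s t := \sum_a j s a * P s a t.

Definition stat_avg j q := \sum_s statd (induced_chain j) s * \sum_a j s a * q s a.

Definition mv_objective (r : S -> X -> R) (beta : R) j :=
  stat_avg j r - beta * stat_avg j (fun s a => (r s a - stat_avg j r) ^+ 2).

Definition mv_reward (r : S -> X -> R) (beta e : R) s a := r s a - beta * (r s a - e) ^+ 2.

Definition gain j0 j1 (Q : S -> X -> R) s := \sum_a (j1 s a - j0 s a) * Q s a.

Lemma induced_chain_stochastic j : stochastic j -> stochastic (induced_chain j).
Proof.
move=> hj s; split=> [t|].
  by apply: sumr_ge0 => a _; rewrite mulr_ge0 ?(hj s).1 ?(P_stoch s a).1.
rewrite /induced_chain exchange_big /= -[RHS](hj s).2; apply: eq_bigr => a _.
by rewrite -mulr_sumr (P_stoch s a).2 mulr1.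
Qed.

Lemma statd_induced j :
  stochastic j -> is_stationary (induced_chain j) (statd (induced_chain j)).
Proof. by move=> hj; exact: statd_stationary s0 (induced_chain_stochastic hj). Qed.

Lemma stat_avg_pair j q : stat_avg j q =
  \sum_(z : S * X) statd (induced_chain j) z.1 * j z.1 z.2 * q z.1 z.2.
Proof.
rewrite /stat_avg -(pair_bigA _ (fun s a => statd (induced_chain j) s * j s a * q s a)) /=.
apply: eq_bigr => s _.
by rewrite mulr_sumr; apply: eq_bigr => a _; rewrite mulrA.
Qed.

Lemma mv_objective_shift r beta e j : stochastic j ->
  mv_objective r beta j = stat_avg j (mv_reward r beta e) + beta * (stat_avg j r - e) ^+ 2.
Proof.
move=> hj; have [[_ pi1] _] := statd_induced hj.
have w1 : \sum_(z : S * X) statd (induced_chain j) z.1 * j z.1 z.2 = 1.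
  rewrite -(pair_bigA _ (fun s a => statd (induced_chain j) s * j s a)) /= -[RHS]pi1.
  apply: eq_bigr => s _.
  by rewrite -mulr_sumr (hj s).2 mulr1.
rewrite /mv_objective !stat_avg_pair.
exact: (mean_variance_shift (fun z => r z.1 z.2) beta e w1).
Qed.

Lemma stat_avg_state j u : stochastic j ->
  stat_avg j (fun s _ => if s == u then 1 else 0) = statd (induced_chain j) u.
Proof.
move=> hj; rewrite /stat_avg -[RHS]sum_delta_mull; apply: eq_bigr => s _.
by rewrite -mulr_suml (hj s).2 mul1r.
Qed.

Section Perturbation.
Variables (j0 : S -> X -> R) (bias : (S -> R) -> S -> R).
Hypothesis j0_stoch : stochastic j0.
Let pi0 := statd (induced_chain j0).
Hypothesis bias_poisson : forall y s,
  bias y s - \sum_t induced_chain j0 s t * bias y t = y s - \sum_t pi0 t * y t.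

Definition qfun q s a := q s a + \sum_t P s a t * bias (fun t => \sum_a j0 t a * q t a) t.

Lemma stat_avg_sub j q : stochastic j ->
  stat_avg j q - stat_avg j0 q = \sum_s statd (induced_chain j) s * gain j0 j (qfun q) s.
Proof.
move=> hj; have [pi_dist piK] := statd_induced hj.
pose h := bias (fun t => \sum_a j0 t a * q t a); set pi := statd _.
have chain_h k s : \sum_a k s a * \sum_t P s a t * h t = \sum_t induced_chain k s t * h t.
  rewrite /induced_chain; under eq_bigr do rewrite mulr_sumr.
  rewrite exchange_big /=; apply: eq_bigr => t _.
  by rewrite mulr_suml; apply: eq_bigr => a _; rewrite mulrA.
have gainE s : gain j0 j (qfun q) s = (\sum_a j s a * q s a - stat_avg j0 q) +
    (\sum_t induced_chain j s t * h t - h s).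
  transitivity ((\sum_a j s a * q s a + \sum_a j s a * \sum_t P s a t * h t) -
      (\sum_a j0 s a * q s a + \sum_a j0 s a * \sum_t P s a t * h t)).
    by rewrite -!big_split -sumrB /=; apply: eq_bigr => a _; rewrite /qfun -/h; ring.
  rewrite !chain_h; have := bias_poisson (fun t => \sum_a j0 t a * q t a) s.
  rewrite /stat_avg -/h -/pi0; lra.
have h_inv : \sum_s pi s * (\sum_t induced_chain j s t * h t - h s) = 0.
  under eq_bigr do rewrite mulrBr mulr_sumr.
  rewrite sumrB exchange_big /=; apply/eqP; rewrite subr_eq0; apply/eqP/eq_bigr => t _.
  by rewrite -[in RHS]piK mulr_suml; apply: eq_bigr => s _; rewrite mulrA.
under [RHS]eq_bigr do rewrite gainE mulrDr.
rewrite big_split /= h_inv addr0.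
under eq_bigr do rewrite mulrBr.
by rewrite sumrB sum_dist_const.
Qed.

Lemma stat_avg_mix j1 d q : stochastic j1 -> 0 <= d <= 1 ->
  stat_avg (mix d j0 j1) q - stat_avg j0 q =
  d * \sum_s statd (induced_chain (mix d j0 j1)) s * gain j0 j1 (qfun q) s.
Proof.
move=> hj1 hd; rewrite stat_avg_sub; last exact: mix_stochastic.
rewrite mulr_sumr.
apply: eq_bigr => s _; rewrite mulrCA; congr (_ * _).
by rewrite /gain mulr_sumr; apply: eq_bigr => a _; rewrite /mix; ring.
Qed.

Lemma norm_gain_le j1 Q s : stochastic j1 -> `|gain j0 j1 Q s| <= 2 * \sum_a `|Q s a|.
Proof.
move=> hj1; rewrite /gain mulr_sumr; apply: le_trans (ler_norm_sum _ _ _) _.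
apply: ler_sum => a _; rewrite normrM ler_wpM2r //.
have := dist_le1 a (hj1 s); have := dist_le1 a (j0_stoch s).
have := (hj1 s).1 a; have := (j0_stoch s).1 a.
by rewrite ler_norml => *; apply/andP; split; lra.
Qed.

Lemma statd_mix_lipschitz : exists C, 0 <= C /\
  forall j1 d u, stochastic j1 -> 0 <= d <= 1 ->
  `|statd (induced_chain (mix d j0 j1)) u - pi0 u| <= d * C.
Proof.
(* pi(u) is the stationary average of the indicator of u. *)
pose Q u := qfun (fun s _ => if s == u then 1 else 0).
have [C [C_ge0 hC]] := exists_ub (fun u => \sum_s 2 * \sum_a `|Q u s a|).
exists C; split=> // j1 d u hj1 hd; have hjd := mix_stochastic hd j0_stoch hj1.
rewrite -(stat_avg_state u hjd) -(stat_avg_state u j0_stoch) stat_avg_mix //.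
rewrite normrM ger0_norm ?(andP hd).1 // ler_wpM2l ?(andP hd).1 //.
apply: le_trans (ler_norm_sum_dist _ (statd_induced hjd).1) (le_trans _ (hC u)).
by apply: ler_sum => s _; exact: norm_gain_le.
Qed.

Variables (r : S -> X -> R) (beta : R).
Let Qt := qfun (mv_reward r beta (stat_avg j0 r)).

Lemma mv_objective_mix j1 d : stochastic j1 -> 0 <= d <= 1 ->
  mv_objective r beta (mix d j0 j1) - mv_objective r beta j0 =
  d * \sum_s statd (induced_chain (mix d j0 j1)) s * gain j0 j1 Qt s +
  beta * (d * \sum_s statd (induced_chain (mix d j0 j1)) s * gain j0 j1 (qfun r) s) ^+ 2.
Proof.
move=> hj1 hd; have hjd := mix_stochastic hd j0_stoch hj1.
rewrite !(mv_objective_shift r beta (stat_avg j0 r)) // -!stat_avg_mix //; ring.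
Qed.

Lemma rderiv0_mv_objective_mix j1 : stochastic j1 ->
  rderiv0 (fun d => mv_objective r beta (mix d j0 j1)) = \sum_s pi0 s * gain j0 j1 Qt s.
Proof.
move=> hj1; rewrite /rderiv0 mix0.
have [C [_ hC]] := statd_mix_lipschitz.
set Gt := gain j0 j1 Qt; set Gr := gain j0 j1 (qfun r).
apply: (@lim_at_right0_of_bound _ _ _
  (C * \sum_s `|Gt s| + `|beta| * (\sum_s `|Gr s|) ^+ 2)).
move=> h /andP[h_gt0 h_le1]; have hd : 0 <= h <= 1 by rewrite ltW.
have pd_dist := (statd_induced (mix_stochastic hd j0_stoch hj1)).1.
rewrite mv_objective_mix //.
set pd := statd _; set B := \sum_s pd s * Gr s.
have -> : h^-1 * (h * \sum_s pd s * Gt s + beta * (h * B) ^+ 2) - \sum_s pi0 s * Gt s =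
    \sum_s (pd s - pi0 s) * Gt s + h * (beta * B ^+ 2).
  under [in RHS]eq_bigr do rewrite mulrBl.
  by rewrite sumrB; field; rewrite gt_eqF.
rewrite mulrDl; apply: le_trans (ler_normD _ _) (lerD _ _).
  apply: le_trans (ler_norm_sum _ _ _) _; rewrite mulrAC [C * h]mulrC mulr_sumr.
  by apply: ler_sum => s _; rewrite normrM ler_wpM2r // hC.
rewrite normrM (gtr0_norm h_gt0) [X in _ <= X]mulrC ler_wpM2l ?(ltW h_gt0) //.
rewrite normrM normrX ler_wpM2l //.
by rewrite lerXn2r ?nnegrE ?sumr_ge0 // ler_norm_sum_dist.
Qed.

End Perturbation.
End StationaryAverage.

Lemma sum_prod_dffun (R : comNzRingType) (I : finType) (T_ : I -> finType)
    (F : forall i, T_ i -> R) :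
  \sum_(a : {dffun forall i, T_ i}) \prod_i F i (a i) = \prod_i \sum_(b : T_ i) F i b.
Proof.
pose F' i := [ffun b => F i b].
transitivity (\sum_(t : fprod T_) \prod_(i in I) F' i (t i)).
  rewrite (reindex (@fprod_of_dffun I T_)); last exact/onW_bij/fprod_of_dffun_bij.
  by apply: eq_bigr => a _; apply: eq_bigr => i _; rewrite /F' ffunE fprodE.
rewrite big_fprod.
transitivity (\prod_i \sum_(j in tagged_with T_ i) untag 0 (F' i) j).
  by rewrite bigA_distr_big_dep.
apply: eq_bigr => i _; rewrite (big_tag (fun i b => F i b) i); apply: eq_bigr => j _.
by rewrite /untag; case: eqP => // e; rewrite ffunE.
Qed.

Section JointPolicy.
Variables (R : realType) (N : nat) (S : finType) (A : 'I_N -> finType).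
Implicit Types (mu : jpolicy R S A).

Lemma jprob_stochastic mu : is_jpolicy mu -> stochastic (jprob mu).
Proof.
move=> hmu s; split=> [a|]; first by apply: prodr_ge0 => i _; exact: (hmu i s).1.
rewrite /jprob (sum_prod_dffun (fun i (b : A i) => mu i s b)).
by apply: big1 => i _; exact: (hmu i s).2.
Qed.

Lemma dev_at mu i (nu : S -> A i -> R) : @dev R N S A mu i nu i = nu.
Proof. exact: dfwith_in. Qed.

Lemma dev_other mu i (nu : S -> A i -> R) j : i != j -> @dev R N S A mu i nu j = mu j.
Proof. exact: dfwith_out. Qed.

Lemma is_jpolicy_dev mu i (nu : S -> A i -> R) :
  is_jpolicy mu -> is_policy nu -> is_jpolicy (dev mu nu).
Proof.
move=> hmu hnu j; have [<-|ij] := eqVneq i j; first by rewrite dev_at.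
by rewrite dev_other.
Qed.

Definition others_prob mu i s (a : jact A) := \prod_(j | j != i) mu j s (a j).

Lemma jprob_split mu i s a : jprob mu s a = mu i s (a i) * others_prob mu i s a.
Proof. by rewrite /jprob (bigD1 i). Qed.

Lemma jprob_dev mu i (nu : S -> A i -> R) s a :
  jprob (dev mu nu) s a = nu s (a i) * others_prob mu i s a.
Proof.
rewrite /jprob (bigD1 i) //= dev_at; congr (_ * _); apply: eq_bigr => j ji.
by rewrite dev_other // eq_sym.
Qed.

Lemma jprob_dev_mix mu i d (nu : S -> A i -> R) :
  jprob (dev mu (mixp d (mu i) nu)) = mix d (jprob mu) (jprob (dev mu nu)).
Proof.
apply/funext => s; apply/funext => a.
by rewrite /mix !jprob_dev (jprob_split mu i) /mixp; ring.
Qed.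

Lemma J_mv_objective P (r : S -> jact A -> R) beta mu :
  J P r beta mu = mv_objective P r beta (jprob mu).
Proof. by []. Qed.

Lemma etaR_stat_avg P (r : S -> jact A -> R) mu : etaR P r mu = stat_avg P (jprob mu) r.
Proof. by []. Qed.

End JointPolicy.

Section LocalAnalysis.
Variables (R : realType) (N : nat) (S : finType) (A : 'I_N -> finType).
Variables (P : S -> jact A -> S -> R) (r : S -> jact A -> R) (beta : R).
Hypothesis beta_ge0 : 0 <= beta.
Hypothesis P_kernel : is_kernel P.
Hypothesis P_ergodic : forall mu : jpolicy R S A, is_jpolicy mu -> ergodic (chain P mu).
Variables (mut : jpolicy R S A) (s0 : S) (bias : (S -> R) -> S -> R).
Arguments mut : clear implicits.
Hypothesis mut_policy : is_jpolicy mut.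
Let j0 := jprob mut.
Let pi0 := statd (induced_chain P j0).
Hypothesis bias_poisson : forall y s,
  bias y s - \sum_t induced_chain P j0 s t * bias y t = y s - \sum_t pi0 t * y t.

Let j0_stoch : stochastic j0 := jprob_stochastic mut_policy.
Let rt : S -> jact A -> R := mv_reward r beta (stat_avg P j0 r).

Definition dgain i (nu : S -> A i -> R) q s :=
  gain j0 (jprob (dev mut nu)) (qfun P j0 bias q) s.

Let pid i d (nu : S -> A i -> R) := statd (induced_chain P (mix d j0 (jprob (dev mut nu)))).

Definition det_policy i (b : A i) : S -> A i -> R := fun _ c => if b == c then 1 else 0.

Definition switch i s (b : A i) : S -> A i -> R :=
  fun t => if t == s then det_policy b t else mut i t.

Lemma is_policy_det_policy i (b : A i) : is_policy (det_policy b).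
Proof.
move=> s; split=> [c|]; first by rewrite /det_policy; case: eqP.
exact: sum_delta.
Qed.

Lemma is_policy_switch i s (b : A i) : is_policy (switch s b).
Proof.
by move=> t; rewrite /switch; case: eqP => _; [exact: is_policy_det_policy | exact: mut_policy].
Qed.

Lemma Dder_dgain i (nu : S -> A i -> R) : is_policy nu ->
  Dder P r beta mut nu = \sum_s pi0 s * dgain nu rt s.
Proof.
move=> hnu; rewrite /Dder (_ : (fun d => _) =
    fun d => mv_objective P r beta (mix d j0 (jprob (dev mut nu)))); last first.
  by apply/funext => d; rewrite J_mv_objective jprob_dev_mix.
exact: rderiv0_mv_objective_mix (jprob_stochastic (is_jpolicy_dev mut_policy hnu)).
Qed.

Lemma J_dev_sub i (nu : S -> A i -> R) d : is_policy nu -> 0 <= d <= 1 ->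
  J P r beta (dev mut (mixp d (mut i) nu)) - J P r beta mut =
  d * \sum_s pid d nu s * dgain nu rt s + beta * (d * \sum_s pid d nu s * dgain nu r s) ^+ 2.
Proof.
move=> hnu hd; rewrite !J_mv_objective jprob_dev_mix.
exact: mv_objective_mix (jprob_stochastic (is_jpolicy_dev mut_policy hnu)) hd.
Qed.

Lemma etaR_dev_sub i (nu : S -> A i -> R) d : is_policy nu -> 0 <= d <= 1 ->
  etaR P r (dev mut (mixp d (mut i) nu)) - etaR P r mut = d * \sum_s pid d nu s * dgain nu r s.
Proof.
move=> hnu hd; rewrite !etaR_stat_avg jprob_dev_mix.
exact: stat_avg_mix (jprob_stochastic (is_jpolicy_dev mut_policy hnu)) hd.
Qed.

Lemma pid_gt0 i (nu : S -> A i -> R) d s : is_policy nu -> 0 <= d <= 1 -> 0 < pid d nu s.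
Proof.
move=> hnu hd; have hjd := mix_stochastic hd j0_stoch
  (jprob_stochastic (is_jpolicy_dev mut_policy hnu)).
apply: (stationary_gt0 s) (induced_chain_stochastic P_kernel hjd) _ (statd_induced s0 P_kernel hjd).
rewrite -jprob_dev_mix; apply: P_ergodic; apply: is_jpolicy_dev => //.
exact: mix_stochastic hd (mut_policy i) hnu.
Qed.

Lemma pi0_gt0 s : 0 < pi0 s.
Proof.
exact: (stationary_gt0 s) (induced_chain_stochastic P_kernel j0_stoch) (P_ergodic mut_policy)
  (statd_induced s0 P_kernel j0_stoch).
Qed.

Lemma dgainE i (nu : S -> A i -> R) q s : dgain nu q s =
  \sum_(a : jact A) (nu s (a i) - mut i s (a i)) * others_prob mut i s a * qfun P j0 bias q s a.
Proof. by apply: eq_bigr => a _; rewrite jprob_dev /j0 (jprob_split mut i) -mulrBl. Qed.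

Lemma dgain_det i (nu : S -> A i -> R) q s : is_policy nu ->
  dgain nu q s = \sum_b nu s b * dgain (det_policy b) q s.
Proof.
move=> hnu; under [RHS]eq_bigr do rewrite dgainE mulr_sumr.
rewrite dgainE exchange_big /=; apply: eq_bigr => a _.
under eq_bigr do rewrite !mulrA; rewrite -!mulr_suml; congr (_ * _ * _).
under eq_bigr do rewrite mulrBr; rewrite sumrB sum_dist_const //.
by rewrite /det_policy sum_delta_mull.
Qed.

Lemma dgain_local i (nu nu' : S -> A i -> R) q s : nu s = nu' s -> dgain nu q s = dgain nu' q s.
Proof. by move=> e; rewrite !dgainE e. Qed.

Lemma dgain_mut i q s : dgain (mut i) q s = 0.
Proof. by rewrite dgainE big1 // => a _; rewrite subrr !mul0r. Qed.

Lemma dgain_switch i s (b : A i) q : dgain (switch s b) q s = dgain (det_policy b) q s.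
Proof. by apply: dgain_local; rewrite /switch eqxx. Qed.

Lemma sum_dgain_switch (w : S -> R) i s (b : A i) q :
  \sum_t w t * dgain (switch s b) q t = w s * dgain (det_policy b) q s.
Proof.
rewrite (bigD1 s) //= dgain_switch big1 ?addr0 // => t /negbTE ts.
by rewrite (@dgain_local _ _ (mut i)) ?dgain_mut ?mulr0 // /switch ts.
Qed.

Hypothesis mut_stationary : first_order_stationary P r beta mut.

Lemma dgain_det_rt_le0 i s (b : A i) : dgain (det_policy b) rt s <= 0.
Proof.
have := mut_stationary (is_policy_switch s b).
rewrite (Dder_dgain (is_policy_switch s b)) (sum_dgain_switch pi0).
by rewrite pmulr_rle0 // pi0_gt0.
Qed.

Lemma dgain_rt_le0 i (nu : S -> A i -> R) s : is_policy nu -> dgain nu rt s <= 0.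
Proof.
move=> hnu; rewrite dgain_det //; apply: sumr_le0 => b _.
by rewrite mulr_ge0_le0 ?(hnu s).1 ?dgain_det_rt_le0.
Qed.

Lemma sum_dgain_rt_le_Dder i (nu : S -> A i -> R) : is_policy nu ->
  \sum_s dgain nu rt s <= Dder P r beta mut nu.
Proof.
move=> hnu; have [pi0_ge0 _] := (statd_induced s0 P_kernel j0_stoch).1.
rewrite Dder_dgain //; apply: ler_sum => s _.
have := dgain_rt_le0 s hnu; have := pi0_ge0 s.
have := dist_le1 s (statd_induced s0 P_kernel j0_stoch).1; nra.
Qed.

Lemma dgain_rt_eq0 i (nu : S -> A i -> R) s : is_policy nu ->
  Dder P r beta mut nu = 0 -> dgain nu rt s = 0.
Proof.
move=> hnu; rewrite Dder_dgain // => /eqP; rewrite -oppr_eq0 -sumrN.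
rewrite psumr_eq0 => [/allP/(_ s (mem_index_enum s))|t _]; last first.
  rewrite -mulrN mulr_ge0 ?(ltW (pi0_gt0 t)) //.
  by rewrite oppr_ge0 dgain_rt_le0.
by rewrite oppr_eq0 mulf_eq0 gt_eqF ?pi0_gt0 //= => /eqP.
Qed.

Lemma statd_dev_lb : exists c dbar, 0 < c /\ 0 < dbar <= 1 /\
  forall d i (nu : S -> A i -> R) s, is_policy nu -> 0 <= d <= dbar -> c <= pid d nu s.
Proof.
have [p [p_gt0 p_le]] := exists_lb_gt0 s0 pi0_gt0.
have p_le1 : p <= 1.
  exact: le_trans (p_le s0) (dist_le1 _ (statd_induced s0 P_kernel j0_stoch).1).
have [C [C_ge0 hC]] := statd_mix_lipschitz s0 P_kernel j0_stoch bias_poisson.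
have C2_gt0 : 0 < 2 * (C + 1) by rewrite mulr_gt0 // ltr_wpDl.
exists (p / 2), (p / (2 * (C + 1))); split; first by rewrite divr_gt0.
split; first by rewrite divr_gt0 //= ler_pdivrMr // mul1r; nra.
move=> d i nu s hnu /andP[d_ge0]; rewrite ler_pdivlMr // => d_small.
have hd : 0 <= d <= 1 by rewrite d_ge0 /=; nra.
have := hC _ d s (jprob_stochastic (is_jpolicy_dev mut_policy hnu)) hd.
rewrite ler_norml => /andP[lb _]; have := p_le s; nra.
Qed.

Lemma sum_dgain_rt_bound : exists M, 0 <= M /\
  forall i (nu : S -> A i -> R), is_policy nu -> - \sum_s dgain nu rt s <= M.
Proof.
have [M [M_ge0 hM]] :=
  exists_ub (fun i => \sum_s \sum_(b : A i) `|dgain (det_policy b) rt s|).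
exists M; split=> // i nu hnu; apply: le_trans (hM i); rewrite -sumrN.
apply: ler_sum => s _; rewrite dgain_det // -sumrN; apply: ler_sum => b _.
by rewrite -mulrN -ler0_norm ?dgain_det_rt_le0 // ler_piMl // dist_le1.
Qed.

Section Margin.
Hypothesis dgain_r_eq0 : forall i s (b : A i),
  dgain (det_policy b) rt s = 0 -> dgain (det_policy b) r s = 0.

Lemma dgain_r_bound : exists K, forall i (nu : S -> A i -> R) s, is_policy nu ->
  `|dgain nu r s| <= K * - dgain nu rt s.
Proof.
pose T := {i : 'I_N & (S * A i)%type}.
have [K hK] := @ratio_bound _ T
  (fun z => dgain (det_policy (tagged z).2) r (tagged z).1)
  (fun z => dgain (det_policy (tagged z).2) rt (tagged z).1) (fun z => @dgain_r_eq0 _ _ _).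
exists K => i nu s hnu; rewrite !(dgain_det _ _ hnu) -sumrN mulr_sumr.
apply: le_trans (ler_norm_sum _ _ _) _; apply: ler_sum => b _.
rewrite normrM ger0_norm ?(hnu s).1 // -mulrN mulrCA ler_wpM2l ?(hnu s).1 //.
by rewrite -ler0_norm ?dgain_det_rt_le0 //; exact: (hK (Tagged _ (s, b))).
Qed.

Lemma sqr_weighted_dgain_r_le : exists K, 0 <= K /\
  forall d i (nu : S -> A i -> R), is_policy nu -> 0 <= d <= 1 ->
  (\sum_s pid d nu s * dgain nu r s) ^+ 2 <= K * - \sum_s dgain nu rt s.
Proof.
have [K hK] := dgain_r_bound; have [M [M_ge0 hM]] := sum_dgain_rt_bound.
exists (K ^+ 2 * M); split=> [|d i nu hnu hd]; first by rewrite mulr_ge0 ?sqr_ge0.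
have := hM i nu hnu; set E := - \sum_s dgain nu rt s => E_le_M.
have E_ge0 : 0 <= E by rewrite oppr_ge0; apply: sumr_le0 => s _; exact: dgain_rt_le0.
have hjd := mix_stochastic hd j0_stoch (jprob_stochastic (is_jpolicy_dev mut_policy hnu)).
set B := \sum_s _ * _.
have : `|B| <= K * E.
  apply: le_trans (ler_norm_sum_dist _ (statd_induced s0 P_kernel hjd).1) _.
  by rewrite /E -sumrN mulr_sumr; apply: ler_sum => s _; exact: hK.
rewrite ler_norml => /andP[B_lb B_ub].
have : 0 <= (K * E - B) * (K * E + B) by apply: mulr_ge0; lra.
have : 0 <= K ^+ 2 * E * (M - E).
  by apply: mulr_ge0 (mulr_ge0 (sqr_ge0 K) E_ge0) _; rewrite subr_ge0.
nra.
Qed.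

Lemma J_dev_margin : exists c dbar, 0 < c /\ 0 < dbar <= 1 /\
  forall d, 0 < d <= dbar -> forall i (nu : S -> A i -> R), is_policy nu ->
  J P r beta (dev mut (mixp d (mut i) nu)) - J P r beta mut <= d * c * \sum_s dgain nu rt s.
Proof.
have [c [d1 [c_gt0 [/andP[d1_gt0 d1_le1] c_le]]]] := statd_dev_lb.
have [K [K_ge0 hK]] := sqr_weighted_dgain_r_le.
have bK_gt0 : 0 < 2 * (beta * K + 1) by rewrite mulr_gt0 // ltr_wpDl ?mulr_ge0.
exists (c / 2), (Num.min d1 (c / (2 * (beta * K + 1)))); split; first by rewrite divr_gt0.
split; first by rewrite lt_min d1_gt0 divr_gt0 //= ge_min d1_le1.
move=> d /andP[d_gt0]; rewrite le_min => /andP[d_le_d1 d_small] i nu hnu.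
have hd : 0 <= d <= 1 by rewrite ltW //= (le_trans d_le_d1).
move: d_small; rewrite ler_pdivlMr // => d_small.
set G := \sum_s dgain nu rt s; set B := \sum_s pid d nu s * dgain nu r s.
have G_le0 : G <= 0 by apply: sumr_le0 => s _; exact: dgain_rt_le0.
have T_le : \sum_s pid d nu s * dgain nu rt s <= c * G.
  rewrite mulr_sumr; apply: ler_sum => s _; apply: ler_wnM2r; first exact: dgain_rt_le0.
  by apply: c_le => //; rewrite ltW //= d_le_d1.
have B_le : B ^+ 2 <= K * - G := hK d i nu hnu hd.
have dK_le : 2 * (beta * d * K) <= c.
  by apply: le_trans d_small; lra.
have mG_ge0 : 0 <= - G by rewrite oppr_ge0.
have := ler_wpM2r (mulr_ge0 (ltW d_gt0) mG_ge0) dK_le.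
have := ler_wpM2l (ltW d_gt0) T_le.
have := ler_wpM2l (mulr_ge0 beta_ge0 (sqr_ge0 d)) B_le.
rewrite J_dev_sub // exprMn -/B; lra.
Qed.

End Margin.
Lemma strict_local_NE_of_Dder_lt0 :
  (forall i (nu : S -> A i -> R), is_policy nu -> nu <> mut i -> Dder P r beta mut nu < 0) ->
  strict_local_NE P r beta mut.
Proof.
move=> Dder_lt0.
have dgain_r_eq0 i s (b : A i) : dgain (det_policy b) rt s = 0 -> dgain (det_policy b) r s = 0.
  move=> alpha0; have [switch_mut|switch_neq] := pselect (switch s b = mut i).
    by rewrite -dgain_switch switch_mut dgain_mut.
  have := Dder_lt0 i _ (is_policy_switch s b) switch_neq.
  by rewrite (Dder_dgain (is_policy_switch s b)) (sum_dgain_switch pi0) alpha0 mulr0 ltxx.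
have [c [dbar [c_gt0 [dbar_le margin]]]] := J_dev_margin dgain_r_eq0.
exists dbar; split=> // d hd i nu hnu nu_neq; rewrite -subr_lt0.
apply: le_lt_trans (margin d hd i nu hnu) _; rewrite pmulr_rlt0 ?mulr_gt0 ?(andP hd).1 //.
exact: le_lt_trans (sum_dgain_rt_le_Dder hnu) (Dder_lt0 i nu hnu nu_neq).
Qed.

Lemma local_NE_of_etaR_flat :
  (forall i (nu : S -> A i -> R), is_policy nu -> Dder P r beta mut nu = 0 ->
    exists dbar : R, 0 < dbar <= 1 /\ forall d : R, 0 < d <= dbar ->
      etaR P r (dev mut (mixp d (mut i) nu)) = etaR P r mut) ->
  local_NE P r beta mut.
Proof.
move=> etaR_flat.
have dgain_r_eq0 i s (b : A i) : dgain (det_policy b) rt s = 0 -> dgain (det_policy b) r s = 0.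
  move=> alpha0; have hsw := is_policy_switch s b.
  have [|db [/andP[db_gt0 db_le1] hdb]] := etaR_flat i _ hsw.
    by rewrite (Dder_dgain hsw) (sum_dgain_switch pi0) alpha0 mulr0.
  have hd : 0 <= db <= 1 by rewrite ltW.
  have := hdb db; rewrite db_gt0 lexx => /(_ isT) /eqP.
  rewrite -subr_eq0 etaR_dev_sub // (sum_dgain_switch (pid db (switch s b))).
  by rewrite !mulf_eq0 (gt_eqF db_gt0) (gt_eqF (pid_gt0 s hsw hd)) => /eqP.
have [c [dbar [c_gt0 [dbar_le margin]]]] := J_dev_margin dgain_r_eq0.
exists dbar; split=> // d hd i nu hnu; rewrite -subr_le0.
apply: le_trans (margin d hd i nu hnu) _; rewrite pmulr_rle0 ?mulr_gt0 ?(andP hd).1 //.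
by apply: sumr_le0 => s _; exact: dgain_rt_le0.
Qed.

Lemma etaR_flat_of_local_NE : local_NE P r beta mut ->
  forall i (nu : S -> A i -> R), is_policy nu -> Dder P r beta mut nu = 0 ->
    exists dbar : R, 0 < dbar <= 1 /\ forall d : R, 0 < d <= dbar ->
      etaR P r (dev mut (mixp d (mut i) nu)) = etaR P r mut.
Proof.
move=> [dbar [dbar_le J_le]] i nu hnu Dder0.
have dgain_rt0 s : dgain nu rt s = 0 := dgain_rt_eq0 s hnu Dder0.
exists dbar; split=> // d /andP[d_gt0 d_le].
have hd : 0 <= d <= 1 by rewrite ltW //= (le_trans d_le) ?(andP dbar_le).2.
apply/eqP; rewrite -subr_eq0 etaR_dev_sub //; apply/eqP.
have [beta0|beta_neq0] := eqVneq beta 0.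
  have rt_r : rt = r.
    by apply/funext => s; apply/funext => a; rewrite /rt /mv_reward beta0 mul0r subr0.
  by rewrite big1 ?mulr0 // => s _; rewrite -rt_r dgain_rt0 mulr0.
have beta_gt0 : 0 < beta by rewrite lt_neqAle eq_sym beta_neq0.
have := J_le d _ i nu hnu; rewrite d_gt0 d_le => /(_ isT).
rewrite -subr_le0 J_dev_sub // big1 ?mulr0 ?add0r => [|s _]; last by rewrite dgain_rt0 mulr0.
rewrite pmulr_rle0 // => sqr_le0.
by apply/eqP; rewrite -sqrf_eq0 eq_le sqr_le0 sqr_ge0.
Qed.

End LocalAnalysis.

Theorem theorem3 (R : realType) (N : nat) (S : finType) (A : 'I_N -> finType)
  (P : S -> jact A -> S -> R) (r : S -> jact A -> R) (beta : R) :
  0 <= beta ->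
  is_kernel P ->
  (forall mu : jpolicy R S A, is_jpolicy mu -> ergodic (chain P mu)) ->
  forall mut : jpolicy R S A, is_jpolicy mut ->
  first_order_stationary P r beta mut ->
  ((forall (i : 'I_N) (mu : S -> A i -> R), is_policy mu -> mu <> mut i ->
      Dder P r beta mut mu < 0) ->
    strict_local_NE P r beta mut)
  /\
  ((exists (i : 'I_N) (mu : S -> A i -> R), is_policy mu /\
      Dder P r beta mut mu = 0) ->
    (local_NE P r beta mut <->
     forall (i : 'I_N) (mu : S -> A i -> R), is_policy mu ->
       Dder P r beta mut mu = 0 ->
       exists dbar : R, 0 < dbar <= 1 /\
         forall d : R, 0 < d <= dbar ->
           etaR P r (dev mut (mixp d (mut i) mu)) = etaR P r mut)).
Proof.
move=> beta_ge0 P_kernel P_ergodic mut mut_policy mut_stationary.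
have [s0 _|S_empty] := pickP (@predT S); last first.
  have no_state (s : S) : False by have := S_empty s.
  have sum0 (F : S -> R) : \sum_s F s = 0 by rewrite big1 // => s; case: (no_state s).
  have dbar1 : 0 < (1 : R) <= 1 by rewrite ltr01 lexx.
  split=> [_|_].
    exists 1; split=> // d _ i nu _ nu_neq; exfalso; apply: nu_neq.
    by apply/funext => s; case: (no_state s).
  split=> [_ i nu _ _|_]; first by exists 1; split=> // d _; rewrite /etaR !sum0.
  by exists 1; split=> // d _ i nu _; rewrite /J /etaR /zeta !sum0.
have j0_stoch := jprob_stochastic mut_policy.
have [bias bias_poisson] := poisson_solvable (induced_chain_stochastic P_kernel j0_stoch)
  (P_ergodic _ mut_policy) (statd_induced s0 P_kernel j0_stoch).
split; first exact: (strict_local_NE_of_Dder_lt0 beta_ge0 P_kernel P_ergodic s0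
  mut_policy bias_poisson mut_stationary).
move=> _; split.
  exact: (etaR_flat_of_local_NE beta_ge0 P_kernel P_ergodic s0
    mut_policy bias_poisson mut_stationary).
exact: (local_NE_of_etaR_flat beta_ge0 P_kernel P_ergodic s0
  mut_policy bias_poisson mut_stationary).
Qed.
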